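(* Let $\mathbf X$ be a random variable with values in $\mathcal X$, let $\mathcal A$ be a finite set, and let $Q_0,Q_1:\mathcal X\times\mathcal A\to(0,\infty)$ be Q-functions with $\mathbb E\big[\sum_{a\in\mathcal A}Q_0(\mathbf X,a)\big]<\infty$. For $\gamma\notin\{0,-1\}$ define $$H_\gamma(Q_0,Q_1)=-\frac1\gamma\,\mathbb E\Bigg[\frac{\sum_{a\in\mathcal A}Q_0(\mathbf X,a)\,Q_1(\mathbf X,a)^{\gamma}}{\big\{\sum_{a\in\mathcal A}Q_1(\mathbf X,a)^{1+\gamma}\big\}^{\frac{\gamma}{1+\gamma}}}\Bigg],\qquad D_\gamma(Q_0,Q_1)=H_\gamma(Q_0,Q_1)-H_\gamma(Q_0,Q_0).$$ For $j=0,1$ let $\mathcal D_j(\mathbf x)=\operatorname{argmax}_{a\in\mathcal A}Q_j(\mathbf x,a)$ (the maximizer being assumed unique for each $\mathbf x$), and define the value function generated by $Q_0$ as $\mathbb V_0(\mathcal D)=\mathbb E[Q_0(\mathbf X,\mathcal D(\mathbf X))]$ for policy functions $\mathcal D:\mathcal X\to\mathcal A$. Then $$\lim_{\gamma\to\infty}\gamma\,D_\gamma(Q_0,Q_1)=\mathbb V_0(\mathcal D_0)-\mathbb V_0(\mathcal D_1).$$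
   Context: A Q-function is a measurable function $\mathcal X\times\mathcal A\to(0,\infty)$; a policy function is a measurable map $\mathcal X\to\mathcal A$. $\mathbb E$ denotes expectation with respect to $\mathbf X$. *)

From HB Require Import structures.
From mathcomp Require Import all_boot all_order all_algebra.
From mathcomp Require Import all_classical all_reals all_analysis.
Set Implicit Arguments. Unset Strict Implicit. Unset Printing Implicit Defensive.
Import Order.TTheory GRing.Theory Num.Theory.
Local Open Scope classical_set_scope.
Local Open Scope ring_scope.

(* Expectation w.r.t. X is written as an integral over the underlying
   probability space (T, P) of a function of X t. *)
Section Defs.
Context {d d' : measure_display} {R : realType} {T : measurableType d}
  {Xs : measurableType d'} {A : finType}.

Definition Hgamma (P : probability T R) (X : T -> Xs) (Q0 Q1 : Xs -> A -> R)
  (g : R) : R :=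
  - g^-1 * Rintegral P setT (fun t =>
      (\sum_a Q0 (X t) a * Q1 (X t) a `^ g)
      / (\sum_a Q1 (X t) a `^ (1 + g)) `^ (g / (1 + g))).

Definition Dgamma (P : probability T R) (X : T -> Xs) (Q0 Q1 : Xs -> A -> R)
  (g : R) : R :=
  Hgamma P X Q0 Q1 g - Hgamma P X Q0 Q0 g.

Definition value0 (P : probability T R) (X : T -> Xs) (Q0 : Xs -> A -> R)
  (D : Xs -> A) : R :=
  Rintegral P setT (fun t => Q0 (X t) (D (X t))).

End Defs.

From mathcomp Require Import all_boot all_order all_algebra.
From mathcomp Require Import all_classical all_reals all_analysis.
From mathcomp Require Import measurable_realfun.
Set Implicit Arguments.
Unset Strict Implicit.
Unset Printing Implicit Defensive.
Import Order.TTheory GRing.Theory Num.Theory.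
Import numFieldNormedType.Exports.
Local Open Scope classical_set_scope.
Local Open Scope ring_scope.

(* The integrand of [- g * H_g(Q0, Q)] is [power_ratio (Q0 x) (Q x) g]. Rescaling
   [Q x] so that its maximum [Q x (D x)] becomes [1] leaves this ratio unchanged;
   then every other [Q x a `^ g] vanishes as [g --> +oo], while the denominator
   [(\sum_a Q x a `^ (1 + g)) `^ (g / (1 + g))] is squeezed between [1] and
   [\sum_a Q x a `^ g --> 1]. So the integrand tends to [Q0 x (D x)] and is
   dominated by [\sum_a Q0 x a], whence [- g * H_g(Q0, Q) --> V_0(D)] by dominated
   convergence, and [g * D_g(Q0, Q1)] is a difference of two such limits. *)

Lemma powR_cvgy0 {R : realType} (x : R) : 0 < x < 1 -> x `^ g @[g --> +oo] --> 0.
Proof.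
move=> /andP[x_gt0 x_lt1].
have lnx_gt0 : 0 < - ln x by rewrite oppr_gt0 ln_lt0 // x_gt0 x_lt1.
have -> : (fun g => x `^ g) = (fun g => expR (- (g * - ln x))).
  by apply/funext => g; rewrite /powR gt_eqF // mulrN opprK.
apply: (cvg_comp (fun g => g * - ln x) (fun y => expR (- y))); last exact: cvgr_expR.
apply/cvgryPge => B; near=> g; rewrite -(ler_pdivrMr _ _ lnx_gt0); near: g.
by apply: nbhs_pinfty_ge; rewrite num_real.
Unshelve. all: by end_near. Qed.

Section power_ratio.
Context {R : realType} {A : finType}.
Implicit Types (c q : A -> R) (g : R).

Definition power_ratio c q g : R :=
  (\sum_a c a * q a `^ g) / (\sum_a q a `^ (1 + g)) `^ (g / (1 + g)).

Lemma cvgy_sum_mul_powR c q a0 :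
  (forall a, 0 < q a) -> q a0 = 1 -> (forall b, b != a0 -> q b < 1) ->
  \sum_a c a * q a `^ g @[g --> +oo] --> c a0.
Proof.
move=> q_gt0 q_a0 q_lt1.
have -> : c a0 = \sum_a (if a == a0 then c a else 0).
  by rewrite (bigD1 a0) //= eqxx big1 ?addr0 // => b /negbTE ->.
apply: cvg_big => //; first exact: add_continuous.
move=> a _; case: eqP => [->|/eqP a_neq].
  by under eq_fun do rewrite q_a0 powR1 mulr1; exact: cvg_cst.
rewrite -[0](mulr0 (c a)); apply: cvgM; first exact: cvg_cst.
by apply: powR_cvgy0; rewrite q_gt0 q_lt1.
Qed.

Lemma power_ratioZ c q k g : 0 < k -> 1 + g != 0 -> (forall a, 0 <= q a) ->
  power_ratio c (fun a => k * q a) g = power_ratio c q g.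
Proof.
move=> k_gt0 g1_neq0 q_ge0; rewrite /power_ratio.
have kg_neq0 : k `^ g != 0 by rewrite gt_eqF // powR_gt0.
have -> : \sum_a c a * (k * q a) `^ g = k `^ g * \sum_a c a * q a `^ g.
  by rewrite mulr_sumr; apply: eq_bigr => a _; rewrite powRM ?(ltW k_gt0) // mulrCA.
have -> : \sum_a (k * q a) `^ (1 + g) = k `^ (1 + g) * \sum_a q a `^ (1 + g).
  by rewrite mulr_sumr; apply: eq_bigr => a _; rewrite powRM ?(ltW k_gt0).
rewrite powRM ?powR_ge0 ?sumr_ge0 // => [|a _]; last exact: powR_ge0.
by rewrite -powRrM mulrCA divff // mulr1 invfM mulrACA divff // mul1r.
Qed.

Section argmax.
Variables (c q : A -> R) (a0 : A).
Hypotheses (q_gt0 : forall a, 0 < q a) (q_max : forall b, b != a0 -> q b < q a0).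

Let r a := (q a0)^-1 * q a.

Let r_gt0 a : 0 < r a. Proof. by rewrite mulr_gt0 ?invr_gt0. Qed.

Let r_a0 : r a0 = 1. Proof. by rewrite /r mulVf // gt_eqF. Qed.

Let r_lt1 b : b != a0 -> r b < 1.
Proof. by move=> /q_max; rewrite /r mulrC ltr_pdivrMr // mul1r. Qed.

Let r_le1 a : r a <= 1.
Proof. by case: (eqVneq a a0) => [->|/r_lt1/ltW //]; rewrite r_a0. Qed.

Let power_ratio_r g : 0 < g -> power_ratio c q g = power_ratio c r g.
Proof.
by move=> g_gt0; rewrite power_ratioZ ?invr_gt0 ?gt_eqF ?addr_gt0 // => a; exact: ltW.
Qed.

Let power_ratio_denom_bounds g : 0 < g ->
  1 <= (\sum_a r a `^ (1 + g)) `^ (g / (1 + g)) <= \sum_a r a `^ g.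
Proof.
move=> g_gt0; have g1_gt0 : 0 < 1 + g by rewrite addr_gt0.
have s_ge1 : 1 <= \sum_a r a `^ (1 + g).
  rewrite (bigD1 a0) //= r_a0 powR1 lerDl.
  by apply: sumr_ge0 => a _; exact: powR_ge0.
apply/andP; split.
  rewrite -[X in X <= _](powRr0 (\sum_a r a `^ (1 + g))).
  by apply: ler_powR => //; rewrite divr_ge0 ?ltW.
apply: (le_trans (ler1_powR s_ge1 _)); first by rewrite ler_pdivrMr // mul1r lerDr.
by apply: ler_sum => a _; apply: ger_powR; rewrite ?lerDr // r_gt0 r_le1.
Qed.

Lemma power_ratio_cvgy : power_ratio c q g @[g --> +oo] --> c a0.
Proof.
have sum_r_cvg : \sum_a r a `^ g @[g --> +oo] --> (1 : R).
  have := cvgy_sum_mul_powR (c := fun=> 1) r_gt0 r_a0 r_lt1.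
  by under eq_fun do under eq_bigr do rewrite mul1r.
have denom_cvg : (\sum_a r a `^ (1 + g)) `^ (g / (1 + g)) @[g --> +oo] --> (1 : R).
  apply: (@squeeze_cvgr _ _ _ _ (fun=> 1) (fun g => \sum_a r a `^ g)).
  - by near=> g; apply: power_ratio_denom_bounds; near: g; apply: nbhs_pinfty_gt.
  - exact: cvg_cst.
  - exact: sum_r_cvg.
apply: cvg_trans (_ : power_ratio c r g @[g --> +oo] --> c a0).
  by apply: near_eq_cvg; near=> g; rewrite power_ratio_r //; near: g; apply: nbhs_pinfty_gt.
rewrite -[c a0]mulr1 -[X in _ * X]invr1.
exact: cvgM (cvgy_sum_mul_powR (c := c) r_gt0 r_a0 r_lt1) (cvgV (oner_neq0 _) denom_cvg).
Unshelve. all: by end_near. Qed.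

Lemma power_ratio_bound g : (forall a, 0 <= c a) -> 0 < g ->
  0 <= power_ratio c q g <= \sum_a c a.
Proof.
move=> c_ge0 g_gt0; rewrite power_ratio_r //.
have /andP[denom_ge1 _] := power_ratio_denom_bounds g_gt0.
have denom_gt0 := lt_le_trans ltr01 denom_ge1.
rewrite /power_ratio divr_ge0 ?sumr_ge0 ?(ltW denom_gt0) // => [|a _]; last first.
  by rewrite mulr_ge0 ?powR_ge0.
rewrite ler_pdivrMr //; apply: (@le_trans _ _ (\sum_a c a)).
  apply: ler_sum => a _; apply: ler_piMr => //.
  by rewrite -[X in _ <= X](powRr0 (r a)) ger_powR ?r_gt0 ?r_le1 ?ltW.
by rewrite ler_peMr ?sumr_ge0.
Qed.

End argmax.
End power_ratio.

Lemma measurable_power_ratio d (T : measurableType d) (R : realType) (A : finType)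
    (c q : T -> A -> R) (g : R) :
  (forall a, measurable_fun setT (c ^~ a)) -> (forall a, measurable_fun setT (q ^~ a)) ->
  measurable_fun setT (fun t => power_ratio (c t) (q t) g).
Proof.
move=> mc mq; rewrite /power_ratio; under eq_fun do rewrite -powRN.
have mpow a p : measurable_fun setT (fun t => q t a `^ p).
  exact: measurableT_comp (measurable_powR _) (mq a).
apply: measurable_funM.
  by apply: measurable_sum => a; exact: measurable_funM.
apply: measurableT_comp (measurable_powR _) _.
by apply: measurable_sum => a; exact: mpow.
Qed.

Lemma dominated_Rintegral_cvgy d (T : measurableType d) (R : realType)
    (mu : {measure set T -> \bar R}) (D : set T) (f : R -> T -> R) (l h : T -> R) :
  measurable D ->
  (forall g, 0 < g -> measurable_fun D (f g)) ->
  (forall t, D t -> f g t @[g --> +oo] --> l t) ->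
  mu.-integrable D (EFin \o h) ->
  (forall g t, 0 < g -> D t -> `|f g t| <= h t) ->
  Rintegral mu D (f g) @[g --> +oo] --> Rintegral mu D l.
Proof.
move=> mD mf f_l h_int f_h; apply/cvg_pinftyP => u u_cvg.
pose v n := Num.max (u n) 1.
have v_gt0 n : 0 < v n by rewrite lt_max ltr01 orbT.
have v_cvg : v n @[n --> \oo] --> +oo.
  apply/cvgryPge => B; apply: filterS ((cvgryPge _).1 u_cvg B) => n.
  by rewrite le_max => ->.
apply: cvg_trans (_ : Rintegral mu D (f (v n)) @[n --> \oo] --> _).
  apply: near_eq_cvg; apply: filterS ((cvgryPge _).1 u_cvg 1) => n u_ge1.
  by rewrite /v max_l.
have mfv n : measurable_fun D (EFin \o f (v n)) by apply/measurable_EFinP/mf.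
have fv_l t : D t -> (f (v n) t)%:E @[n --> \oo] --> (l t)%:E.
  move=> Dt; apply/cvg_EFin; first exact: nearW.
  exact: (cvg_pinftyP _ _).1 (f_l t Dt) v v_cvg.
have ml : measurable_fun D (EFin \o l) := emeasurable_fun_cvg _ _ mfv fv_l.
have fv_h t n : D t -> (`|(f (v n) t)%:E| <= (h t)%:E)%E.
  by move=> Dt; rewrite /= lee_fin f_h.
have [l_int _] := dominated_convergence mD mfv ml (aeW _ fv_l) h_int (aeW _ fv_h).
by rewrite -(fineK (integrable_fin_num mD l_int)) => /fine_cvg.
Qed.

Lemma Rintegral_power_ratio_cvgy d (T : measurableType d) (R : realType) (A : finType)
    (mu : {measure set T -> \bar R}) (c q : T -> A -> R) (D : T -> A) :
  (forall a, measurable_fun setT (c ^~ a)) -> (forall a, measurable_fun setT (q ^~ a)) ->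
  (forall t a, 0 <= c t a) -> (forall t a, 0 < q t a) ->
  (\int[mu]_t (\sum_a c t a)%:E < +oo)%E ->
  (forall t b, b != D t -> q t b < q t (D t)) ->
  Rintegral mu setT (fun t => power_ratio (c t) (q t) g) @[g --> +oo] -->
    Rintegral mu setT (fun t => c t (D t)).
Proof.
move=> mc mq c_ge0 q_gt0 sum_c_fin q_max.
apply: (dominated_Rintegral_cvgy (h := fun t => \sum_a c t a)) => //.
- by move=> g _; exact: measurable_power_ratio.
- by move=> t _; exact: power_ratio_cvgy (q_gt0 t) (q_max t).
- apply/integrableP; split.
    by apply/measurable_EFinP; apply: measurable_sum.
  rewrite (eq_integral (fun t => (\sum_a c t a)%:E)); first exact: sum_c_fin.
  by move=> t _; rewrite /= ger0_norm ?sumr_ge0.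
- move=> g t g_gt0 _.
  have /andP[ratio_ge0 ratio_le] := power_ratio_bound (q_gt0 t) (q_max t) (c_ge0 t) g_gt0.
  by rewrite ger0_norm.
Qed.

Lemma mulr_Dgamma d d' (R : realType) (T : measurableType d) (Xs : measurableType d')
    (A : finType) (P : probability T R) (X : T -> Xs) (Q0 Q1 : Xs -> A -> R) (g : R) :
  g != 0 ->
  g * Dgamma P X Q0 Q1 g =
    Rintegral P setT (fun t => power_ratio (Q0 (X t)) (Q0 (X t)) g) -
    Rintegral P setT (fun t => power_ratio (Q0 (X t)) (Q1 (X t)) g).
Proof.
move=> g_neq0; rewrite /Dgamma /Hgamma.
have scale_diff (a b : R) : g * (- g^-1 * a - - g^-1 * b) = b - a.
  by rewrite mulrBr !mulrA !mulrN mulrV ?unitfE // !mulN1r opprK addrC.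
exact: scale_diff.
Qed.

Theorem theorem2 (d d' : measure_display) (R : realType) (T : measurableType d)
  (Xs : measurableType d') (A : finType) (P : probability T R) (X : T -> Xs)
  (Q0 Q1 : Xs -> A -> R) (D0 D1 : Xs -> A) :
  measurable_fun setT X ->
  (forall a, measurable_fun setT (fun x => Q0 x a)) ->
  (forall a, measurable_fun setT (fun x => Q1 x a)) ->
  (forall x a, 0 < Q0 x a) ->
  (forall x a, 0 < Q1 x a) ->
  (\int[P]_t (\sum_a Q0 (X t) a)%:E < +oo)%E ->
  (forall x b, b != D0 x -> Q0 x b < Q0 x (D0 x)) ->
  (forall x b, b != D1 x -> Q1 x b < Q1 x (D1 x)) ->
  (g * Dgamma P X Q0 Q1 g) @[g --> +oo] -->
    value0 P X Q0 D0 - value0 P X Q0 D1.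
Proof.
move=> mX mQ0 mQ1 Q0_gt0 Q1_gt0 sum_Q0_fin D0_max D1_max.
have mQ0X a : measurable_fun setT (fun t => Q0 (X t) a) := measurableT_comp (mQ0 a) mX.
have mQ1X a : measurable_fun setT (fun t => Q1 (X t) a) := measurableT_comp (mQ1 a) mX.
have Q0_ge0 t a : 0 <= Q0 (X t) a by exact: ltW.
have V0_cvg := Rintegral_power_ratio_cvgy mQ0X mQ0X Q0_ge0 (fun t => Q0_gt0 (X t))
  sum_Q0_fin (fun t => D0_max (X t)).
have V1_cvg := Rintegral_power_ratio_cvgy mQ0X mQ1X Q0_ge0 (fun t => Q1_gt0 (X t))
  sum_Q0_fin (fun t => D1_max (X t)).
apply: cvg_trans (cvgB V0_cvg V1_cvg); apply: near_eq_cvg.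
by near=> g; rewrite mulr_Dgamma // gt_eqF //; near: g; apply: nbhs_pinfty_gt.
Unshelve. all: by end_near. Qed.
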